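(* Let $d\ge2$ and suppose $Q(z)=z^d+t$ ($t\in\mathbb{C}$) is post-critically finite. Let $\lambda\neq0$ be the multiplier of some periodic orbit of $Q$. Then $\lambda$ belongs to some number field $\mathbb{K}$, and for any non-Archimedean place $v$ of $\mathbb{K}$: $|\lambda|_v<1$ if the residual characteristic of $\mathbb{K}_v$ divides $d$, and $|\lambda|_v=1$ if the residual characteristic of $\mathbb{K}_v$ is prime to $d$.
   Context: A polynomial is post-critically finite if all its critical points have finite forward orbits. *)

From HB Require Import structures.
From mathcomp Require Import all_boot all_order all_algebra all_field.
From mathcomp Require Import complex.
From mathcomp Require Import reals.
Set Implicit Arguments. Unset Strict Implicit. Unset Printing Implicit Defensive.
Import Order.TTheory GRing.Theory Num.Theory.
Local Open Scope ring_scope.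

Notation Cplx R := (complex R).

Definition poly_iter (F : nzRingType) (P : {poly F}) (n : nat) : {poly F} :=
  iter n (fun q => P \Po q) 'X.

Definition finite_forward_orbit (F : nzRingType) (P : {poly F}) (c : F) : Prop :=
  exists s : seq F, forall n, iter n (horner P) c \in s.

Definition pcf (F : nzRingType) (P : {poly F}) : Prop :=
  forall c, root P^`() c -> finite_forward_orbit P c.

Definition is_periodic_multiplier (F : nzRingType) (P : {poly F}) (lam : F) : Prop :=
  exists (z0 : F) (n : nat),
    [/\ (0 < n)%N, iter n (horner P) z0 = z0,
        (forall m, (0 < m < n)%N -> iter m (horner P) z0 != z0) &
        lam = (poly_iter P n)^`().[z0]].

Definition nonarch_abs (K : fieldType) (R : realType) (v : K -> R) : Prop :=
  [/\ forall x, 0 <= v x,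
      forall x, v x = 0 <-> x = 0,
      forall x y, v (x * y) = v x * v y,
      forall x y, v (x + y) <= Num.max (v x) (v y) &
      exists x, x != 0 /\ v x != 1].

(* p is the residual characteristic of the completion K_v: p is a prime lying
   in the maximal ideal {x | v x < 1} of the valuation ring of v. *)
Definition residual_char (K : fieldType) (R : realType) (v : K -> R) (p : nat) : Prop :=
  prime p /\ v p%:R < 1.

From HB Require Import structures.
From mathcomp Require Import all_boot all_order all_algebra all_field.
From mathcomp Require Import complex.
From mathcomp Require Import reals.
From Stdlib Require Import Classical.
From mathcomp Require Import zify.
Import Order.TTheory GRing.Theory Num.Theory.
Local Open Scope ring_scope.

(* All the data live in a number field: the critical value t is a root of a
   difference of two Gleason polynomials, and a periodic point is a root of
   Q^n(z) - z over Q(t).  By the chain rule the multiplier of an n-cycle (z_k)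
   is d^n (prod_k z_k)^(d-1).  For a non-Archimedean v, the finite critical
   orbit forces |t|_v <= 1 and then |z|_v <= 1 for every z with finite orbit,
   so |lambda|_v <= |d|_v^n, which is < 1 when the residual characteristic
   divides d.  When it is prime to d, |d|_v = 1 and every |z_k|_v = 1:
   otherwise a cycle point u of minimal absolute value < 1 attracts the
   critical orbit, since z^d + t strictly contracts the open unit disc, so the
   orbits of 0 and u eventually collide; at the first collision two distinct
   d-th roots of one number would be closer than |u|_v, whereas distinct d-th
   roots of unity are at distance 1 when |d|_v = 1. *)

Set Implicit Arguments.
Unset Strict Implicit.
Unset Printing Implicit Defensive.

Lemma finite_range_repeat (T : eqType) (g : nat -> T) (s : seq T) :
  (forall k, g k \in s) -> exists i j, (i < j)%N /\ g i = g j.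
Proof.
move=> gs; have : ~~ uniq (map g (iota 0 (size s).+1)).
  apply/negP => /uniq_leq_size le_size.
  have /le_size : {subset map g (iota 0 (size s).+1) <= s}.
    by move=> _ /mapP[i _ ->]; apply: gs.
  by rewrite size_map size_iota ltnn.
case/(uniqPn (g 0)) => i [j [ij]]; rewrite size_map size_iota => lt_j.
have lt_i := ltn_trans ij lt_j.
by rewrite !(nth_map 0%N) ?size_iota // !nth_iota // !add0n => eq_ij; exists i, j.
Qed.

Lemma finite_range_not_increasing (T : eqType) (R : realDomainType)
    (g : nat -> T) (h : T -> R) (s : seq T) :
  (forall k, g k \in s) -> ~ (forall k, h (g k) < h (g k.+1)).
Proof.
move=> gs incr; have [i [j [ij eq_ij]]] := finite_range_repeat gs.
by have := homo_ltn (f := h \o g) lt_trans incr ij; rewrite /= eq_ij ltxx.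
Qed.

Lemma iter_mul_period (T : Type) (g : T -> T) n x :
  iter n g x = x -> forall q, iter (q * n) g x = x.
Proof. by move=> per; elim=> [|q IH] //; rewrite mulSn iterD IH per. Qed.

Lemma iter_mod_period (T : Type) (g : T -> T) n x :
  iter n g x = x -> forall k, iter k g x = iter (k %% n) g x.
Proof. by move=> per k; rewrite {1}(divn_eq k n) addnC iterD iter_mul_period. Qed.

Section Orbits.
Variables (F : nzRingType) (P : {poly F}).

Lemma finite_orbitP x :
  finite_forward_orbit P x <->
  exists i j, (i < j)%N /\ iter i (horner P) x = iter j (horner P) x.
Proof.
split=> [[s]|[i [j [ij eq_ij]]]]; first exact: finite_range_repeat.
exists [seq iter k (horner P) x | k <- iota 0 j] => m.
elim: m {-2}m (leqnn m) => [|M IH] m le_mM.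
  move: le_mM; rewrite leqn0 => /eqP->.
  by apply: map_f; rewrite mem_iota (leq_ltn_trans _ ij).
have [lt_mj|le_jm] := ltnP m j; first by apply: map_f; rewrite mem_iota.
by rewrite -(subnK le_jm) iterD -eq_ij -iterD; apply: IH; lia.
Qed.

Lemma finite_orbit_iter x k :
  finite_forward_orbit P x -> finite_forward_orbit P (iter k (horner P) x).
Proof. by case=> s gs; exists s => j; rewrite -iterD. Qed.

Lemma finite_orbit_periodic x n :
  (0 < n)%N -> iter n (horner P) x = x -> finite_forward_orbit P x.
Proof. by move=> n_gt0 per; apply/finite_orbitP; exists 0%N, n. Qed.

End Orbits.

Section NonArchimedeanAbs.
Variables (K : fieldType) (R : realType) (v : K -> R).
Hypothesis hv : nonarch_abs v.

Lemma absv_ge0 x : 0 <= v x. Proof. by case: hv. Qed.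
Lemma absv_eq0 x : v x = 0 <-> x = 0. Proof. by case: hv. Qed.
Lemma absvM x y : v (x * y) = v x * v y. Proof. by case: hv. Qed.
Lemma absvD_max x y : v (x + y) <= Num.max (v x) (v y). Proof. by case: hv. Qed.

Lemma absv_gt0 x : x != 0 -> 0 < v x.
Proof.
by move=> x_neq0; rewrite lt_def absv_ge0 andbT; apply: contra_neq x_neq0 => /absv_eq0.
Qed.

Lemma absv0 : v 0 = 0. Proof. exact/absv_eq0. Qed.

Lemma absv1 : v 1 = 1.
Proof.
have v1_neq0 : v 1 != 0 by apply/eqP => /absv_eq0/eqP; rewrite oner_eq0.
by apply: (mulfI v1_neq0); rewrite -absvM !mulr1.
Qed.

Lemma absvX x n : v (x ^+ n) = v x ^+ n.
Proof. by elim: n => [|n IH]; rewrite ?absv1 // !exprS absvM IH. Qed.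

Lemma absvN x : v (- x) = v x.
Proof.
suff vN1 : v (-1) = 1 by rewrite -mulN1r absvM vN1 mul1r.
have /eqP : v (-1) ^+ 2 = 1 by rewrite -absvX sqrrN expr1n absv1.
by rewrite pexpr_eq1 ?absv_ge0 // => /eqP.
Qed.

Lemma absvD_le x y B : v x <= B -> v y <= B -> v (x + y) <= B.
Proof. by move=> vx vy; apply: le_trans (absvD_max x y) _; rewrite ge_max vx vy. Qed.

Lemma absvD_eq x y : v y < v x -> v (x + y) = v x.
Proof.
move=> lt_yx; apply/eqP; rewrite eq_le absvD_le ?(ltW lt_yx) //=.
have := absvD_max (x + y) (- y); rewrite addrK absvN le_max => /orP[//|le_xy].
by rewrite leNgt lt_yx in le_xy.
Qed.

Lemma absv_natr_le1 n : v n%:R <= 1.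
Proof.
elim: n => [|n IH]; first by rewrite absv0 ler01.
by rewrite -addn1 natrD absvD_le ?absv1.
Qed.

Lemma absv_sum_le I (r : seq I) (F : I -> K) B :
  0 <= B -> (forall i, v (F i) <= B) -> v (\sum_(i <- r) F i) <= B.
Proof.
move=> B_ge0 le_FB; apply: (big_ind (fun x => v x <= B)) => //.
  by rewrite absv0.
by move=> x y; apply: absvD_le.
Qed.

Lemma absv_prod I (r : seq I) (F : I -> K) :
  v (\prod_(i <- r) F i) = \prod_(i <- r) v (F i).
Proof. exact: (big_morph v absvM absv1). Qed.

Lemma absv_natr_lt1 p d : v p%:R < 1 -> (p %| d)%N -> v d%:R < 1.
Proof.
move=> vp /dvdnP[q ->]; rewrite natrM absvM (le_lt_trans _ vp) //.
by rewrite ler_piMl ?absv_ge0 ?absv_natr_le1.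
Qed.

(* Bezout: 1 = a p - b d, where both p and d would be small. *)
Lemma absv_natr_eq1 p d : prime p -> v p%:R < 1 -> coprime p d -> v d%:R = 1.
Proof.
move=> p_pr vp cop_pd; apply/eqP; rewrite eq_le absv_natr_le1 /= leNgt.
apply/negP => vd; have [a b bezout _] := egcdnP d (prime_gt0 p_pr).
rewrite (eqP cop_pd) in bezout.
have one_E : 1 = a%:R * p%:R - b%:R * d%:R :> K.
  by rewrite -!natrM bezout natrD addrAC subrr add0r.
have small n x : v x < 1 -> v (n%:R * x) < 1.
  by rewrite absvM; apply: le_lt_trans; rewrite ler_piMl ?absv_ge0 ?absv_natr_le1.
have : v 1 < 1.
  by rewrite one_E (le_lt_trans (absvD_max _ _)) // gt_max absvN !small.
by rewrite absv1 ltxx.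
Qed.

Lemma absv_natr_le_subr1 (w : K) d :
  (0 < d)%N -> w ^+ d = 1 -> w != 1 -> v d%:R <= v (w - 1).
Proof.
move=> d_gt0 wd w_neq1.
have vw : v w = 1 by apply/eqP; rewrite -(pexpr_eq1 d_gt0) ?absv_ge0 // -absvX wd absv1.
have sum_pow0 : \sum_(i < d) w ^+ i = 0.
  apply/eqP; have /eqP := subrX1 w d; rewrite wd subrr eq_sym mulf_eq0 subr_eq0.
  by rewrite (negPf w_neq1).
have dE : d%:R = (1 - w) * \sum_(i < d) \sum_(j < i) w ^+ j.
  rewrite -opprB mulNr big_distrr /=; under eq_bigr do rewrite -subrX1.
  by rewrite sumrB sum_pow0 sumr_const card_ord sub0r opprK.
rewrite dE absvM -opprB absvN ler_piMr ?absv_ge0 //.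
apply: absv_sum_le => // i; apply: absv_sum_le => // j.
by rewrite absvX vw expr1n.
Qed.

Lemma absv_natr_mul_le_sub (a b : K) d :
  (0 < d)%N -> a ^+ d = b ^+ d -> a != b -> v d%:R * v b <= v (a - b).
Proof.
move=> d_gt0 ab_d a_neq_b; have [->|b_neq0] := eqVneq b 0.
  by rewrite absv0 mulr0 absv_ge0.
have wd : (a / b) ^+ d = 1 by rewrite expr_div_n ab_d divff ?expf_neq0.
have w_neq1 : a / b != 1 by apply: contra_neq a_neq_b => /(divr1_eq) ->.
rewrite -[a in a - b](divfK b_neq0) -[X in _ - X]mul1r -mulrBl absvM.
by apply: ler_wpM2r; rewrite ?absv_ge0 ?absv_natr_le_subr1.
Qed.

End NonArchimedeanAbs.

Lemma horner_poly_iter (F : comNzRingType) (P : {poly F}) n x :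
  (poly_iter P n).[x] = iter n (horner P) x.
Proof. by elim: n => [|n IH] /=; rewrite ?hornerX // horner_comp IH. Qed.

Lemma map_poly_iter (F G : nzRingType) (f : {rmorphism F -> G}) (P : {poly F}) n :
  map_poly f (poly_iter P n) = poly_iter (map_poly f P) n.
Proof. by elim: n => [|n IH] /=; rewrite ?map_polyX // map_comp_poly IH. Qed.

Lemma deriv_poly_iter (F : comNzRingType) (P : {poly F}) n x :
  (poly_iter P n)^`().[x] = \prod_(k < n) P^`().[iter k (horner P) x].
Proof.
elim: n => [|n IH] /=; first by rewrite derivX hornerC big_ord0.
by rewrite deriv_comp hornerM horner_comp IH big_ord_recr /= mulrC horner_poly_iter.
Qed.

Lemma iter_horner_map (F G : nzRingType) (f : {rmorphism F -> G}) (P : {poly F}) k x :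
  f (iter k (horner P) x) = iter k (horner (map_poly f P)) (f x).
Proof. by elim: k => [|k IH] //=; rewrite -IH horner_map. Qed.

Lemma finite_orbit_map (F : fieldType) (G : nzRingType) (f : {rmorphism F -> G})
    (P : {poly F}) x :
  finite_forward_orbit (map_poly f P) (f x) -> finite_forward_orbit P x.
Proof.
case/finite_orbitP=> i [j [ij eq_ij]]; apply/finite_orbitP; exists i, j; split=> //.
by apply: (fmorph_inj f); rewrite !iter_horner_map.
Qed.

Section Unicritical.
Variables (K : fieldType) (d : nat) (c : K).
Hypothesis d_ge2 : (2 <= d)%N.

Local Notation P := ('X^d + c%:P : {poly K}).
Local Notation f := (horner P).

Let d_gt0 : (0 < d)%N. Proof. exact: ltnW. Qed.

Lemma horner_unicritical x : P.[x] = x ^+ d + c.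
Proof. by rewrite hornerD hornerXn hornerC. Qed.

Lemma horner_unicritical0 : P.[0] = c.
Proof. by rewrite horner_unicritical expr0n gtn_eqF // add0r. Qed.

Lemma multiplier_unicritical n x :
  (poly_iter P n)^`().[x] = d%:R ^+ n * (\prod_(k < n) iter k f x) ^+ d.-1.
Proof.
rewrite deriv_poly_iter derivD derivXn derivC addr0.
under eq_bigr do rewrite hornerMn hornerXn -mulr_natl.
by rewrite big_split prodr_const card_ord prodrXl.
Qed.

Section Valuation.
Variables (R : realType) (v : K -> R).
Hypothesis hv : nonarch_abs v.

Let x_lt_xd (r : R) : 1 < r -> r < r ^+ d.
Proof. by move=> r_gt1; rewrite -{1}(expr1 r) ltr_eXn2l. Qed.

Let xd_lt_x (r : R) : 0 < r -> r < 1 -> r ^+ d < r.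
Proof. by move=> r_gt0 r_lt1; rewrite -{2}(expr1 r) ltr_iXn2l. Qed.

Lemma absv_horner_grow x : Num.max 1 (v c) < v x -> v x < v P.[x].
Proof.
rewrite gt_max => /andP[vx_gt1 vc_lt].
have vx_lt := x_lt_xd vx_gt1.
by rewrite horner_unicritical (absvD_eq hv) (absvX hv) // (lt_trans vc_lt).
Qed.

Lemma absv_le_finite_orbit x : finite_forward_orbit P x -> v x <= Num.max 1 (v c).
Proof.
case=> s orbit_s; rewrite leNgt; apply/negP => escape.
have grow k : Num.max 1 (v c) < v (iter k f x).
  by elim: k => [|k IH] //=; apply: lt_trans IH (absv_horner_grow IH).
by apply: (finite_range_not_increasing (h := v) orbit_s) => k; apply: absv_horner_grow.
Qed.

Lemma absv_c_le1 : finite_forward_orbit P 0 -> v c <= 1.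
Proof.
move=> crit; rewrite leNgt; apply/negP => vc_gt1.
have := absv_le_finite_orbit (finite_orbit_iter 2 crit).
rewrite /= horner_unicritical0 horner_unicritical (absvD_eq hv) (absvX hv).
  by rewrite (max_idPr (ltW vc_gt1)) leNgt x_lt_xd.
by rewrite x_lt_xd.
Qed.

Lemma absv_horner_sub a b : v a <= 1 -> v b <= 1 ->
  v (P.[a] - P.[b]) <= v (a - b) * Num.max (v a) (v b) ^+ d.-1.
Proof.
move=> va vb; rewrite !horner_unicritical opprD addrACA subrr addr0 subrXX.
rewrite (absvM hv) ler_wpM2l ?(absv_ge0 hv) //.
apply: (absv_sum_le hv) => [|i]; first by rewrite exprn_ge0 // le_max absv_ge0.
have le_id : (i <= d.-1)%N by rewrite -ltnS prednK.
rewrite (absvM hv) !(absvX hv) -[X in _ <= _ ^+ X](subnK le_id) exprD.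
by rewrite ler_pM ?exprn_ge0 ?absv_ge0 // lerXn2r ?nnegrE ?le_max ?absv_ge0 ?lexx ?orbT.
Qed.

Lemma absv_horner_sub_le a b : v a <= 1 -> v b <= 1 -> v (P.[a] - P.[b]) <= v (a - b).
Proof.
move=> va vb; apply: le_trans (absv_horner_sub va vb) _.
rewrite ler_piMr ?absv_ge0 // exprn_ile1 ?ge_max ?va ?vb //.
by rewrite le_max absv_ge0.
Qed.

Lemma absv_horner_sub_lt a b : v a < 1 -> v b < 1 -> a != b ->
  v (P.[a] - P.[b]) < v (a - b).
Proof.
move=> va vb a_neq_b; apply: le_lt_trans (absv_horner_sub (ltW va) (ltW vb)) _.
rewrite gtr_pMr ?(absv_gt0 hv) ?subr_eq0 // exprn_ilt1 ?gt_max ?va ?vb //.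
  by rewrite -lt0n -ltnS prednK.
by rewrite le_max absv_ge0.
Qed.

Section PostCriticallyFinite.
Hypothesis crit : finite_forward_orbit P 0.

Lemma absv_le1_finite_orbit x : finite_forward_orbit P x -> v x <= 1.
Proof.
by move=> /absv_le_finite_orbit; rewrite (max_idPl (absv_c_le1 crit)).
Qed.

Lemma absv_iter_sub_le a b k :
  finite_forward_orbit P a -> finite_forward_orbit P b ->
  v (iter k f a - iter k f b) <= v (a - b).
Proof.
move=> fin_a fin_b; elim: k => [//|k IH] /=; apply: le_trans IH.
by apply: absv_horner_sub_le; apply: absv_le1_finite_orbit; apply: finite_orbit_iter.
Qed.

Lemma absv_iter_sub_lt a b k : (0 < k)%N ->
  finite_forward_orbit P a -> finite_forward_orbit P b ->
  v a < 1 -> v b < 1 -> a != b ->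
  v (iter k f a - iter k f b) < v (a - b).
Proof.
case: k => // k _ fin_a fin_b va vb a_neq_b; rewrite !iterSr.
apply: le_lt_trans (absv_horner_sub_lt va vb a_neq_b).
by apply: absv_iter_sub_le; apply: (finite_orbit_iter 1).
Qed.

(* The n-th iterate strictly contracts the open unit disc towards the cycle
   point u, while the orbit of x takes only finitely many values. *)
Lemma cycle_attracts x u n : (0 < n)%N ->
  finite_forward_orbit P x -> v x < 1 -> v u < 1 -> iter n f u = u ->
  exists i, iter (i * n) f x = u.
Proof.
move=> n_gt0 fin_x vx vu per_u; apply: NNPP => no_hit.
have fin_u := finite_orbit_periodic n_gt0 per_u.
pose A i := iter (i * n) f x; pose e i := v (A i - u).
have A_neq i : A i != u by apply/eqP => hit; apply: no_hit; exists i.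
have A_step i : A i.+1 = iter n f (A i) by rewrite /A mulSn iterD.
have fin_A i : finite_forward_orbit P (A i) by apply: finite_orbit_iter.
have e_step i : v (A i.+1 - u) = v (iter n f (A i) - iter n f u) by rewrite A_step per_u.
have e_lt1 i : e i < 1.
  elim: i => [|i IH].
    by rewrite /e /A /= (le_lt_trans (absvD_max hv _ _)) ?gt_max ?(absvN hv) ?vx.
  by rewrite /e e_step (le_lt_trans _ IH) ?absv_iter_sub_le.
have vA i : v (A i) < 1.
  by rewrite -[A i](subrK u) (le_lt_trans (absvD_max hv _ _)) // gt_max e_lt1.
case: fin_x => s orbit_s.
apply: (finite_range_not_increasing (g := A) (h := fun y => - v (y - u))) => [i|i].
  exact: orbit_s.
by rewrite ltrN2 e_step absv_iter_sub_lt.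
Qed.

(* A collision of the orbits would come from two distinct d-th roots of the same
   number, which lie far apart since v d = 1. *)
Lemma crit_orbit_avoids_cycle u : v d%:R = 1 -> u != 0 -> v u < 1 ->
  (forall m, v u <= v (iter m f u)) -> finite_forward_orbit P u ->
  forall N, iter N f 0 != iter N f u.
Proof.
move=> vd u_neq0 vu min_u fin_u; elim=> [|N IH]; first by rewrite eq_sym.
apply/eqP => collide.
have pow_eq : iter N f 0 ^+ d = iter N f u ^+ d.
  by move: collide; rewrite /= !horner_unicritical => /addIr.
have vu_le : v u <= v (iter N f 0 - iter N f u).
  apply: le_trans (min_u N) _; rewrite -[v (iter N f u)]mul1r -vd.
  exact: absv_natr_mul_le_sub.
case: N {IH collide} pow_eq vu_le => [/=|N _].
  by rewrite expr0n gtn_eqF // => /esym/eqP; rewrite expf_eq0 (negPf u_neq0) andbF.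
rewrite !iterSr => vu_le.
have := le_trans vu_le (absv_iter_sub_le N (finite_orbit_iter 1 crit) (finite_orbit_iter 1 fin_u)).
rewrite /= horner_unicritical0 horner_unicritical opprD addrCA subrr addr0 (absvN hv).
by rewrite (absvX hv) leNgt xd_lt_x ?(absv_gt0 hv).
Qed.

Lemma absv_cycle_eq1 Z n : v d%:R = 1 -> (0 < n)%N -> iter n f Z = Z ->
  (forall k, iter k f Z != 0) -> forall k, v (iter k f Z) = 1.
Proof.
move=> vd n_gt0 per nz k.
have fin_Z := finite_orbit_periodic n_gt0 per.
have [k0 _ min_k0] :=
  arg_minP (fun i : 'I_n => v (iter i f Z)) (isT : predT (Ordinal n_gt0)).
set u := iter k0 f Z.
have min_u m : v u <= v (iter m f Z).
  by rewrite (iter_mod_period per) (min_k0 (Ordinal (ltn_pmod m n_gt0))).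
have per_u : iter n f u = u by rewrite /u -iterD addnC iterD per.
apply/eqP; rewrite eq_le absv_le1_finite_orbit ?leNgt /=; last exact: finite_orbit_iter.
apply/negP => vk_lt1; have vu := le_lt_trans (min_u k) vk_lt1.
have v0_lt1 : v 0 < 1 by rewrite (absv0 hv) ltr01.
have [i hit] := cycle_attracts n_gt0 crit v0_lt1 vu per_u.
have min_u' m : v u <= v (iter m f u) by rewrite -iterD.
have := crit_orbit_avoids_cycle vd (nz k0) vu min_u' (finite_orbit_iter k0 fin_Z) (i * n).
by rewrite hit iter_mul_period ?eqxx.
Qed.

Lemma absv_multiplier Z n p : (0 < n)%N -> iter n f Z = Z ->
  (poly_iter P n)^`().[Z] != 0 -> prime p -> v p%:R < 1 ->
  ((p %| d)%N -> v (poly_iter P n)^`().[Z] < 1) /\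
  (coprime p d -> v (poly_iter P n)^`().[Z] = 1).
Proof.
move=> n_gt0 per; rewrite multiplier_unicritical => mu_neq0 p_pr vp.
rewrite (absvM hv) !(absvX hv) (absv_prod hv); split=> [dvd_pd|cop_pd].
  have vd := absv_natr_lt1 hv vp dvd_pd.
  apply: le_lt_trans (_ : v d%:R ^+ n < 1); last by rewrite exprn_ilt1 ?absv_ge0 -?lt0n.
  have vZ k : 0 <= v (iter k f Z) <= 1.
    rewrite (absv_ge0 hv) absv_le1_finite_orbit //.
    exact/finite_orbit_iter/(finite_orbit_periodic n_gt0).
  by rewrite ler_piMr ?exprn_ge0 ?absv_ge0 // exprn_ile1 ?prodr_ile1 ?prodr_ge0 // => k _;
    case/andP: (vZ k).
have vd := absv_natr_eq1 hv p_pr vp cop_pd.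
have /prodf_neq0 cycle_neq0 : \prod_(k < n) iter k f Z != 0.
  by apply: contraNneq mu_neq0 => ->; rewrite expr0n -(subnKC d_ge2) mulr0.
have nz k : iter k f Z != 0.
  by rewrite (iter_mod_period per) (cycle_neq0 (Ordinal (ltn_pmod k n_gt0))).
rewrite vd expr1n mul1r big1 ?expr1n // => k _.
exact: (absv_cycle_eq1 vd n_gt0 per nz).
Qed.

End PostCriticallyFinite.
End Valuation.
End Unicritical.

Lemma size_exp_addr (F : idomainType) d k (q r : {poly F}) : (2 <= d)%N ->
  size q = (d ^ k).+1 -> (size r <= 2)%N -> size (q ^+ d + r) = (d ^ k.+1).+1.
Proof.
move=> d_ge2 size_q size_r.
have size_qd : size (q ^+ d) = (d ^ k.+1).+1.
  have q_neq0 : q != 0 by rewrite -size_poly_gt0 size_q.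
  have := size_exp q d; rewrite size_q /= -expnSr => <-.
  by rewrite prednK // size_poly_gt0 expf_neq0.
rewrite size_polyDl // size_qd ltnS (leq_trans size_r) //.
exact: leq_ltn_trans (ltn0Sn k) (ltn_expl _ d_ge2).
Qed.

Lemma size_poly_iter_unicritical (F : idomainType) d (c : F) n : (2 <= d)%N ->
  size (poly_iter ('X^d + c%:P) n) = (d ^ n).+1.
Proof.
move=> d_ge2; elim: n => [|n IH] /=; first by rewrite size_polyX.
rewrite comp_polyD comp_Xn_poly comp_polyC; apply: size_exp_addr => //.
exact: leq_trans (size_polyC_leq1 _) _.
Qed.

Definition gleason_poly (d k : nat) : {poly rat} := iter k (fun q => q ^+ d + 'X) 0.

Lemma gleason_polyE (L : numFieldType) d (t : L) k :
  (map_poly ratr (gleason_poly d k)).[t] = iter k (horner ('X^d + t%:P)) 0.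
Proof.
elim: k => [|k IH] /=; first by rewrite rmorph0 horner0.
by rewrite rmorphD rmorphXn /= map_polyX !hornerE IH.
Qed.

Lemma size_gleason_poly d k : (2 <= d)%N -> size (gleason_poly d k.+1) = (d ^ k).+1.
Proof.
move=> d_ge2; elim: k => [|k IH].
  by rewrite /= expr0n gtn_eqF ?(ltnW d_ge2) // add0r size_polyX.
by rewrite [LHS]/= (size_exp_addr _ IH) ?size_polyX.
Qed.

Lemma crit_value_algebraic (L : numFieldType) d (t : L) : (2 <= d)%N ->
  finite_forward_orbit ('X^d + t%:P) 0 ->
  exists2 q : {poly rat}, q != 0 & root (map_poly ratr q) t.
Proof.
move=> d_ge2 /finite_orbitP[i [j [lt_ij eq_ij]]].
exists (gleason_poly d j - gleason_poly d i).
  rewrite subr_eq0; apply/negP => /eqP/(congr1 (fun q : {poly _} => size q)).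
  case: j lt_ij {eq_ij} => // j lt_ij; case: i lt_ij => [|i] lt_ij.
    by rewrite /= size_poly0 size_gleason_poly.
  rewrite !size_gleason_poly // => /succn_inj/eqP.
  by rewrite eqn_exp2l ?gtn_eqF // (ltnW d_ge2).
by rewrite /root rmorphB /= hornerD hornerN !gleason_polyE eq_ij subrr.
Qed.

Lemma periodic_point_algebraic (F L : fieldType)
    (iota : {rmorphism F -> L}) d (c : F) (z : L) n : (2 <= d)%N -> (0 < n)%N ->
  iter n (horner (map_poly iota ('X^d + c%:P))) z = z ->
  exists2 q : {poly F}, q != 0 & root (map_poly iota q) z.
Proof.
move=> d_ge2 n_gt0 per; exists (poly_iter ('X^d + c%:P) n - 'X).
  rewrite subr_eq0; apply/negP => /eqP/(congr1 (fun q : {poly _} => size q)).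
  rewrite size_poly_iter_unicritical // size_polyX => /succn_inj dn_eq1.
  by have := ltn_expl n d_ge2; rewrite dn_eq1 ltnNge n_gt0.
rewrite /root rmorphB /= map_polyX map_poly_iter hornerD hornerN hornerX.
by rewrite horner_poly_iter per subrr.
Qed.

Lemma exists_irreducible_root (F L : fieldType) (iota : {rmorphism F -> L})
    (q : {poly F}) (z : L) :
  q != 0 -> root (map_poly iota q) z ->
  exists2 p : {poly F}, irreducible_poly p & root (map_poly iota p) z.
Proof.
move: {2}(size q) (leqnn (size q)) => N; elim: N q => [|N IH] q le_qN q_neq0 qz.
  by move: q_neq0; rewrite -size_poly_eq0 -leqn0 le_qN.
have [[q' [q'_neq0 q'z lt_q'q]]|min_q] := classic
  (exists q', [/\ q' != 0, root (map_poly iota q') z & (size q' < size q)%N]).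
  by apply: (IH q') => //; rewrite -ltnS (leq_trans lt_q'q le_qN).
exists q => //; apply/(subfx_irreducibleP qz q_neq0) => q' q'z q'_neq0.
by rewrite leqNgt; apply/negP => lt_q'q; apply: min_q; exists q'.
Qed.

Lemma adjoin_root (K : fieldExtType rat) (L : fieldType) (iota : {rmorphism K -> L})
    (q : {poly K}) (z : L) :
  q != 0 -> root (map_poly iota q) z ->
  exists (E : fieldExtType rat) (j : K -> E) (iotaE : {rmorphism E -> L}) (Z : E),
    iotaE Z = z /\ forall x, iotaE (j x) = iota x.
Proof.
move=> q_neq0 qz; have [p irr_p pz] := exists_irreducible_root q_neq0 qz.
have p_neq0 := irredp_neq0 irr_p.
exists (baseFieldType (SubFieldExtType pz irr_p)), (in_alg _), subfx_inj.
exists (subfx_root iota z p); split; first exact: subfx_inj_root.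
by move=> x; apply: subfx_inj_base.
Qed.

Lemma unicritical_cycle_number_field (L : numFieldType) d (t z : L) n :
  (2 <= d)%N -> (0 < n)%N -> finite_forward_orbit ('X^d + t%:P) 0 ->
  iter n (horner ('X^d + t%:P)) z = z ->
  exists (K : fieldExtType rat) (iota : {rmorphism K -> L}) (c Z : K),
    iota c = t /\ iota Z = z.
Proof.
move=> d_ge2 n_gt0 crit per.
have [q q_neq0 qt] := crit_value_algebraic d_ge2 crit.
have [K1 [_ [iota1 [T [iota1T _]]]]] := adjoin_root (K := rat^o) (iota := ratr) q_neq0 qt.
have map_P1 : map_poly iota1 ('X^d + T%:P) = 'X^d + t%:P.
  by rewrite rmorphD /= map_polyXn map_polyC /= iota1T.
rewrite -map_P1 in per; have [G G_neq0 Gz] := periodic_point_algebraic d_ge2 n_gt0 per.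
have [K [j [iota [Z [iotaZ iota_j]]]]] := adjoin_root G_neq0 Gz.
by exists K, iota, (j T), Z; rewrite iota_j.
Qed.

Theorem proposition5p4 (R : realType) (d : nat) (t lam : Cplx R) :
  (2 <= d)%N ->
  pcf ('X^d + t%:P) ->
  is_periodic_multiplier ('X^d + t%:P) lam ->
  lam != 0 ->
  exists (K : fieldExtType rat) (iota : {rmorphism K -> Cplx R}) (mu : K),
    iota mu = lam /\
    forall (v : K -> R), nonarch_abs v ->
      forall p : nat, residual_char v p ->
        ((p %| d)%N -> v mu < 1) /\ (coprime p d -> v mu = 1).
Proof.
move=> d_ge2 pcf_Q [z0 [n [n_gt0 per _ ->]]] lam_neq0.
have crit : finite_forward_orbit ('X^d + t%:P) 0.
  apply: pcf_Q; rewrite /root derivD derivXn derivC addr0 hornerMn hornerXn.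
  by rewrite expr0n -(subnKC d_ge2) mul0rn.
have [K [iota [c [Z [iota_c iota_Z]]]]] :=
  unicritical_cycle_number_field d_ge2 n_gt0 crit per.
have map_P : map_poly iota ('X^d + c%:P) = 'X^d + t%:P.
  by rewrite rmorphD /= map_polyXn map_polyC /= iota_c.
pose mu := (poly_iter ('X^d + c%:P) n)^`().[Z].
have iota_mu : iota mu = (poly_iter ('X^d + t%:P) n)^`().[z0].
  by rewrite -horner_map -deriv_map map_poly_iter map_P iota_Z.
exists K, iota, mu; split=> // v hv p [p_pr vp].
have crit_K : finite_forward_orbit ('X^d + c%:P) 0.
  by apply: (finite_orbit_map (f := iota)); rewrite map_P rmorph0.
have per_Z : iter n (horner ('X^d + c%:P)) Z = Z.
  by apply: (fmorph_inj iota); rewrite iter_horner_map map_P iota_Z.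
have mu_neq0 : mu != 0.
  by apply: contra_neq lam_neq0; rewrite -iota_mu => ->; rewrite rmorph0.
exact: (absv_multiplier d_ge2 hv crit_K n_gt0 per_Z mu_neq0 p_pr vp).
Qed.
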